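(* Let $G=(V,E)$ be a finite graph. (a) Eulerian equivalence $\sim$ is an equivalence relation on the set $\mathcal O(G)$ of orientations. (b) If $\rho,\sigma\in\mathcal O(G)$ are Eulerian equivalent and $\rho$ is totally cyclic, then so is $\sigma$. (c) Let $q$ be a positive integer and $\rho,\sigma\in\mathcal O(G)$ with $\rho\sim\sigma$. Then $Q_{\rho,\sigma}$ restricts to a bijection $q\bar\Delta^+_{\mathrm{FL}}(G,\sigma)\to q\bar\Delta^+_{\mathrm{FL}}(G,\rho)$ sending lattice points to lattice points; in particular $Q_{\rho,\sigma}(q\Delta^+_{\mathrm{FL}}(G,\sigma))=q\Delta^+_{\mathrm{FL}}(G,\rho)$, $\varphi_\rho(G,q)=\varphi_\sigma(G,q)$ and $\bar\varphi_\rho(G,q)=\bar\varphi_\sigma(G,q)$.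
   Context: An orientation assigns each edge (including loops) one of its two directions; $\varepsilon(v,e)=1$ ($-1$) if non-loop $e$ points out of (into) end-vertex $v$, $0$ otherwise. Real flows $F(G,\varepsilon;\mathbb R)$: $f:E\to\mathbb R$ with $\sum_e m_{v,e}f(e)=0$ for all $v$, $m_{v,e}=\varepsilon(v,e)$ for non-loops, $0$ for loops; integer flows $F(G,\varepsilon;\mathbb Z)$ similarly. A digraph is directed Eulerian if in-degree equals out-degree at each vertex (a loop contributing one of each). $\rho\sim\sigma$ (Eulerian equivalent) if the spanning subgraph whose edges are those on which $\rho,\sigma$ differ is directed Eulerian with respect to $\rho$ (equivalently $\sigma$). A cut $[S,S^c]$ (nonempty set of all edges between a nonempty proper vertex set $S$ and its complement) is directed if all its edges point from $S$ to $S^c$ or all from $S^c$ to $S$; an orientation is totally cyclic if it has no directed cut. $Q_{\rho,\sigma}:[0,q]^E\to[0,q]^E$ is $(Q_{\rho,\sigma}g)(e)=g(e)$ if $\rho,\sigma$ give $e$ the same direction and $q-g(e)$ otherwise. $q\Delta^+_{\mathrm{FL}}(G,\rho)=\{f\in F(G,\rho;\mathbb R):0<f(e)<q\ \forall e\}$, $q\bar\Delta^+_{\mathrm{FL}}(G,\rho)=\{f\in F(G,\rho;\mathbb R):0\le f(e)\le q\ \forall e\}$; lattice points are those in $\mathbb Z^E$. $\varphi_\rho(G,q)=\#\{f\in F(G,\rho;\mathbb Z):0<f(e)<q\ \forall e\}$, $\bar\varphi_\rho(G,q)=\#\{f\in F(G,\rho;\mathbb Z):0\le f(e)\le q\ \forall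 e\}$. *)

From HB Require Import structures.
From mathcomp Require Import all_boot all_order all_algebra.
From mathcomp Require Import reals.
Set Implicit Arguments. Unset Strict Implicit. Unset Printing Implicit Defensive.
Import Order.TTheory GRing.Theory Num.Theory.
Local Open Scope ring_scope.

(* An orientation is rho : E -> bool; rho e = true means e is directed from
   (ends e).1 to (ends e).2, rho e = false means from (ends e).2 to (ends e).1. *)

Section Graph.
Variables (V E : finType) (ends : E -> V * V).

Definition is_loop (e : E) : bool := (ends e).1 == (ends e).2.

Definition tail (rho : E -> bool) (e : E) : V :=
  if rho e then (ends e).1 else (ends e).2.
Definition head (rho : E -> bool) (e : E) : V :=
  if rho e then (ends e).2 else (ends e).1.

Definition eps (rho : E -> bool) (v : V) (e : E) : int :=
  if is_loop e then 0
  else if tail rho e == v then 1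
  else if head rho e == v then -1 else 0.

Definition is_flow (R : pzRingType) (rho : E -> bool) (f : E -> R) : bool :=
  [forall v : V, \sum_(e : E) (eps rho v e)%:~R * f e == 0].

(* the spanning subgraph with edge set D, oriented by rho, is directed
   Eulerian: indegree = outdegree at every vertex (a loop counts once each) *)
Definition directed_eulerian (rho : E -> bool) (D : {set E}) : Prop :=
  forall v : V, #|[set e in D | tail rho e == v]| = #|[set e in D | head rho e == v]|.

Definition diff_set (rho sigma : E -> bool) : {set E} :=
  [set e | rho e != sigma e].

Definition euler_equiv (rho sigma : E -> bool) : Prop :=
  directed_eulerian rho (diff_set rho sigma).

Definition cut_edges (S : {set V}) : {set E} :=
  [set e | ((ends e).1 \in S) != ((ends e).2 \in S)].

Definition is_cut (S : {set V}) : Prop :=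
  S != set0 /\ S != [set: V] /\ cut_edges S != set0.

Definition directed_cut (rho : E -> bool) (S : {set V}) : Prop :=
  is_cut S /\
  ((forall e, e \in cut_edges S -> tail rho e \in S) \/
   (forall e, e \in cut_edges S -> head rho e \in S)).

Definition totally_cyclic (rho : E -> bool) : Prop :=
  ~ exists S : {set V}, directed_cut rho S.

Definition Qmap (R : pzRingType) (q : nat) (rho sigma : E -> bool) (g : E -> R)
  : E -> R :=
  fun e => if rho e == sigma e then g e else q%:R - g e.

Definition flow_open (R : realType) (q : nat) (rho : E -> bool) (f : E -> R) : Prop :=
  is_flow rho f /\ forall e, 0 < f e < q%:R.
Definition flow_closed (R : realType) (q : nat) (rho : E -> bool) (f : E -> R) : Prop :=
  is_flow rho f /\ forall e, 0 <= f e <= q%:R.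

Definition lattice_point (R : realType) (f : E -> R) : Prop :=
  forall e, f e \is a Num.int.

(* phi_rho(G,q) and bar phi_rho(G,q): integer flows with values in (0,q),
   resp. [0,q]; these are enumerated as functions E -> {0,...,q}. *)
Definition phi (rho : E -> bool) (q : nat) : nat :=
  #|[set f : {ffun E -> 'I_q.+1} |
      is_flow rho (fun e => ((f e : nat)%:Z)) && [forall e, (0 < f e < q)%N]]|.
Definition phibar (rho : E -> bool) (q : nat) : nat :=
  #|[set f : {ffun E -> 'I_q.+1} | is_flow rho (fun e => ((f e : nat)%:Z))]|.

End Graph.

(* Reversing the edges on which rho and sigma differ changes the outflow of an
   orientation at v by twice the outflow there of that subgraph, so rho ~ sigma
   iff rho and sigma have the same outflow at every vertex; this gives (a).
   Summed over S, a cut [S, S^c] is directed out of (into) S iff the outflow of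
   S is (minus) the number of cut edges, which gives (b). For (c), Q is an
   involution preserving [0, q] and (0, q) edgewise, and the rho-divergence of
   Q f at v is the sigma-divergence of f plus q times the outflow at v of the
   difference subgraph, which vanishes. *)
From Pilot Require Import Defs.
From HB Require Import structures.
From mathcomp Require Import all_boot all_order all_algebra.
From mathcomp Require Import reals.
From mathcomp Require Import zify.
From mathcomp Require Import boolp.
Import Order.TTheory GRing.Theory Num.Theory.
Local Open Scope ring_scope.

Lemma card_sum_indicator (T : finType) (A : {pred T}) :
  #|A|%:Z = \sum_x (x \in A : nat)%:Z.
Proof.
rewrite -sum1_card (big_morph Posz PoszD (erefl 0%:Z)) [LHS]big_mkcond.
by apply: eq_bigr => x _; case: (x \in A).
Qed.

Section EulerianEquivalence.
Set Implicit Arguments. Unset Strict Implicit.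
Variables (V E : finType) (ends : E -> V * V).
Implicit Types (rho sigma tau : E -> bool) (v : V) (e : E) (S : {set V}).

Local Notation tail := (tail ends).
Local Notation head := (Defs.head ends).
Local Notation eps := (eps ends).

Lemma epsE rho v e :
  eps rho v e = ((tail rho e == v) : nat)%:Z - ((head rho e == v) : nat)%:Z.
Proof.
rewrite /eps /is_loop /Defs.tail /Defs.head; case: (ends e) => a b /=.
have [<-|ab] := eqVneq a b; first by case: (rho e); rewrite subrr.
case: (rho e).
- have [<-|av] := eqVneq a v; first by rewrite eq_sym (negbTE ab).
  by case: eqVneq.
- have [<-|bv] := eqVneq b v; first by rewrite (negbTE ab).
  by case: eqVneq.
Qed.

Lemma eps_same rho sigma v e : rho e = sigma e -> eps sigma v e = eps rho v e.
Proof. by rewrite !epsE /Defs.tail /Defs.head => ->. Qed.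

Lemma eps_flip rho sigma v e : rho e != sigma e -> eps sigma v e = - eps rho v e.
Proof.
by rewrite !epsE /Defs.tail /Defs.head opprB; case: (rho e); case: (sigma e).
Qed.

Definition outflow rho v : int := \sum_e eps rho v e.

Definition flip_outflow rho sigma v : int :=
  \sum_(e | rho e != sigma e) eps rho v e.

Lemma euler_equivE rho sigma :
  euler_equiv ends rho sigma <-> forall v, flip_outflow rho sigma v = 0.
Proof.
have flip_card v : flip_outflow rho sigma v =
    #|[set e in diff_set rho sigma | tail rho e == v]|%:Z
  - #|[set e in diff_set rho sigma | head rho e == v]|%:Z.
  rewrite !card_sum_indicator -sumrB /flip_outflow big_mkcond.
  by apply: eq_bigr => e _; rewrite !inE epsE; case: (_ != _).
split=> [eul v | flip0 v]; first by rewrite flip_card eul subrr.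
by apply/eqP; rewrite -eqz_nat -subr_eq0 -flip_card flip0.
Qed.

Lemma outflowB rho sigma v :
  outflow rho v - outflow sigma v = flip_outflow rho sigma v *+ 2.
Proof.
rewrite /outflow -sumrB (bigID (fun e => rho e != sigma e)) /=.
rewrite [X in _ + X]big1 => [|e /negPn/eqP/eps_same->]; last by rewrite subrr.
by rewrite addr0 -sumrMnl; apply: eq_bigr => e /eps_flip->; rewrite opprK.
Qed.

Lemma euler_equivP rho sigma :
  euler_equiv ends rho sigma <-> forall v, outflow rho v = outflow sigma v.
Proof.
rewrite euler_equivE; split=> H v; apply/eqP.
  by rewrite -subr_eq0 outflowB H mul0rn.
by move/eqP: (H v); rewrite -subr_eq0 outflowB mulrn_eq0.
Qed.

Lemma euler_equiv_refl rho : euler_equiv ends rho rho.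
Proof. by apply/euler_equivP. Qed.

Lemma euler_equiv_sym rho sigma :
  euler_equiv ends rho sigma -> euler_equiv ends sigma rho.
Proof. by rewrite !euler_equivP => H v; rewrite H. Qed.

Lemma euler_equiv_trans rho sigma tau :
  euler_equiv ends rho sigma -> euler_equiv ends sigma tau ->
  euler_equiv ends rho tau.
Proof. by rewrite !euler_equivP => H1 H2 v; rewrite H1 H2. Qed.

Definition set_outflow rho S : int := \sum_(v in S) outflow rho v.

Lemma set_outflowE rho S : set_outflow rho S =
  \sum_e (((tail rho e \in S) : nat)%:Z - ((head rho e \in S) : nat)%:Z).
Proof.
have sum_eq x : \sum_(v in S) ((x == v) : nat)%:Z = ((x \in S) : nat)%:Z.
  rewrite big_mkcond (eq_bigr (fun v => if v == x then ((x \in S) : nat)%:Z else 0)).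
    by rewrite -big_mkcond big_pred1_eq.
  by move=> v _; rewrite eq_sym; case: eqP => [->|]; case: (_ \in S).
rewrite /set_outflow /outflow exchange_big; apply: eq_bigr => e _.
by under eq_bigr do rewrite epsE; rewrite sumrB !sum_eq.
Qed.

Lemma in_cut_edges rho S e :
  (e \in cut_edges ends S) = ((tail rho e \in S) != (head rho e \in S)).
Proof.
by rewrite inE /Defs.tail /Defs.head; case: (rho e); rewrite // eq_sym.
Qed.

Lemma set_outflow_out rho S :
  (forall e, e \in cut_edges ends S -> tail rho e \in S) <->
  set_outflow rho S = #|cut_edges ends S|%:Z.
Proof.
have edgewise e : ((tail rho e \in S) : nat)%:Z - ((head rho e \in S) : nat)%:Z
    <= (e \in cut_edges ends S : nat)%:Z
    ?= iff ((e \in cut_edges ends S) ==> (tail rho e \in S)).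
  by rewrite (in_cut_edges rho); case: (_ \in S); case: (_ \in S).
have flux_eq : (set_outflow rho S == #|cut_edges ends S|%:Z) =
    [forall e, (e \in cut_edges ends S) ==> (tail rho e \in S)].
  rewrite set_outflowE card_sum_indicator.
  exact: (leif_sum (P := predT) (fun e _ => edgewise e)).2.
split=> [out | /eqP].
- by apply/eqP; rewrite flux_eq; apply/forallP => e; apply/implyP/out.
- by rewrite flux_eq => /forallP out e /(implyP (out e)).
Qed.

Lemma set_outflow_flip rho S :
  set_outflow (fun e => ~~ rho e) S = - set_outflow rho S.
Proof.
rewrite /set_outflow /outflow -sumrN; apply: eq_bigr => v _.
by rewrite -sumrN; apply: eq_bigr => e _; apply: eps_flip; case: (rho e).
Qed.

Lemma set_outflow_in rho S :
  (forall e, e \in cut_edges ends S -> head rho e \in S) <->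
  set_outflow rho S = - #|cut_edges ends S|%:Z.
Proof.
have tail_flip e : tail (fun e => ~~ rho e) e = head rho e.
  by rewrite /Defs.tail /Defs.head; case: (rho e).
have [out_flip flip_out] := set_outflow_out (fun e => ~~ rho e) S.
rewrite set_outflow_flip in out_flip flip_out.
split=> [dir | flux].
- by rewrite -[LHS]opprK out_flip // => e /dir; rewrite tail_flip.
- by move=> e; rewrite -tail_flip; apply: flip_out; rewrite flux opprK.
Qed.

Lemma directed_cut_euler rho sigma S : euler_equiv ends rho sigma ->
  directed_cut ends rho S -> directed_cut ends sigma S.
Proof.
move=> /euler_equivP same_outflow [cutS dir]; split=> //.
have flux : set_outflow sigma S = set_outflow rho S.
  by apply: eq_bigr => v _; rewrite same_outflow.
case: dir => [/set_outflow_out | /set_outflow_in]; rewrite -flux => H;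
  [left; exact/set_outflow_out | right; exact/set_outflow_in].
Qed.

Lemma totally_cyclic_euler rho sigma : euler_equiv ends rho sigma ->
  totally_cyclic ends rho -> totally_cyclic ends sigma.
Proof.
move=> /euler_equiv_sym eul cyc [S dcut]; apply: cyc; exists S.
exact: directed_cut_euler dcut.
Qed.

Lemma QmapK (R : pzRingType) q rho sigma : involutive (@Qmap E R q rho sigma).
Proof.
move=> g; apply: funext => e; rewrite /Qmap.
by case: eqP => // _; rewrite opprB addrC subrK.
Qed.

Lemma QmapC (R : pzRingType) q rho sigma (g : E -> R) :
  Qmap q rho sigma g = Qmap q sigma rho g.
Proof. by apply: funext => e; rewrite /Qmap eq_sym. Qed.

Lemma is_flow_Qmap (R : pzRingType) q rho sigma (f : E -> R) :
  euler_equiv ends rho sigma -> is_flow ends sigma f ->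
  is_flow ends rho (Qmap q rho sigma f).
Proof.
move=> /euler_equivE flip0 /forallP flow; apply/forallP => v.
have edgewise e : (eps rho v e)%:~R * Qmap q rho sigma f e =
    (eps sigma v e)%:~R * f e +
    (if rho e != sigma e then (eps rho v e)%:~R * q%:R else 0).
  rewrite /Qmap; have [/eps_same-> | /eps_flip->] := eqVneq (rho e) (sigma e).
    by rewrite addr0.
  by rewrite mulrBr intrN mulNr addrC.
under eq_bigr do rewrite edgewise.
rewrite big_split /= (eqP (flow v)) add0r -big_mkcond /= -mulr_suml.
by rewrite -rmorph_sum /= -/(flip_outflow rho sigma v) flip0 mul0r.
Qed.

Lemma is_flow_QmapE (R : pzRingType) q rho sigma (g : E -> R) :
  euler_equiv ends rho sigma ->
  is_flow ends rho (Qmap q rho sigma g) = is_flow ends sigma g.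
Proof.
move=> eul; apply/idP/idP => [|]; last exact: is_flow_Qmap.
move/(is_flow_Qmap q (euler_equiv_sym eul)).
by rewrite -QmapC QmapK.
Qed.

Lemma Qmap_itv_closed (R : numDomainType) q rho sigma (f : E -> R) e :
  (0 <= Qmap q rho sigma f e <= q%:R) = (0 <= f e <= q%:R).
Proof.
by rewrite /Qmap; case: eqP => // _; rewrite subr_ge0 lerBlDr lerDl andbC.
Qed.

Lemma Qmap_itv_open (R : numDomainType) q rho sigma (f : E -> R) e :
  (0 < Qmap q rho sigma f e < q%:R) = (0 < f e < q%:R).
Proof.
by rewrite /Qmap; case: eqP => // _; rewrite subr_gt0 ltrBlDr ltrDl andbC.
Qed.

Lemma flow_closed_Qmap (R : realType) q rho sigma (f : E -> R) :
  euler_equiv ends rho sigma ->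
  flow_closed ends q rho (Qmap q rho sigma f) <-> flow_closed ends q sigma f.
Proof.
move=> eul; rewrite /flow_closed is_flow_QmapE //.
by split=> -[flow bnd]; split=> // e; move: (bnd e); rewrite Qmap_itv_closed.
Qed.

Lemma flow_open_Qmap (R : realType) q rho sigma (f : E -> R) :
  euler_equiv ends rho sigma ->
  flow_open ends q rho (Qmap q rho sigma f) <-> flow_open ends q sigma f.
Proof.
move=> eul; rewrite /flow_open is_flow_QmapE //.
by split=> -[flow bnd]; split=> // e; move: (bnd e); rewrite Qmap_itv_open.
Qed.

Lemma lattice_point_Qmap (R : realType) q rho sigma (f : E -> R) :
  lattice_point f -> lattice_point (Qmap q rho sigma f).
Proof.
move=> int_f e; rewrite /Qmap; case: eqP => _; first exact: int_f.
by rewrite rpredB ?natr_int.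
Qed.

(* On ['I_q.+1], [rev_ord i] has value [q - i]. *)
Definition Qffun q rho sigma (f : {ffun E -> 'I_q.+1}) : {ffun E -> 'I_q.+1} :=
  [ffun e => if rho e == sigma e then f e else rev_ord (f e)].

Lemma QffunK q rho sigma : involutive (@Qffun q rho sigma).
Proof.
by move=> f; apply/ffunP => e; rewrite !ffunE; case: eqP => // _; rewrite rev_ordK.
Qed.

Lemma Qffun_int q rho sigma (f : {ffun E -> 'I_q.+1}) :
  (fun e => (Qffun rho sigma f e : nat)%:Z) =
  Qmap q rho sigma (fun e => (f e : nat)%:Z).
Proof.
apply: funext => e; rewrite /Qmap ffunE.
by case: eqP => //= _; rewrite subSS natz subzn // -ltnS.
Qed.

Lemma Qffun_interior q rho sigma (f : {ffun E -> 'I_q.+1}) :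
  [forall e, 0 < Qffun rho sigma f e < q]%N = [forall e, 0 < f e < q]%N.
Proof.
apply: eq_forallb => e; rewrite ffunE; case: eqP => //= _.
by rewrite subSS; move: (ltn_ord (f e)); lia.
Qed.

Lemma phi_euler q rho sigma :
  euler_equiv ends rho sigma -> phi ends rho q = phi ends sigma q.
Proof.
move=> eul; rewrite /phi -[LHS](card_preimset _ (can_inj (@QffunK q rho sigma))).
by apply: eq_card => f; rewrite !inE Qffun_int is_flow_QmapE // Qffun_interior.
Qed.

Lemma phibar_euler q rho sigma :
  euler_equiv ends rho sigma -> phibar ends rho q = phibar ends sigma q.
Proof.
move=> eul; rewrite /phibar -[LHS](card_preimset _ (can_inj (@QffunK q rho sigma))).
by apply: eq_card => f; rewrite !inE Qffun_int is_flow_QmapE.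
Qed.

End EulerianEquivalence.

Theorem lemma5p1 (V E : finType) (ends : E -> V * V) (R : realType) :
  [/\ (forall rho : E -> bool, euler_equiv ends rho rho),
      (forall rho sigma : E -> bool,
          euler_equiv ends rho sigma -> euler_equiv ends sigma rho)
    & (forall rho sigma tau : E -> bool,
          euler_equiv ends rho sigma -> euler_equiv ends sigma tau ->
          euler_equiv ends rho tau)] /\
  (forall rho sigma : E -> bool,
      euler_equiv ends rho sigma -> totally_cyclic ends rho ->
      totally_cyclic ends sigma) /\
  (forall (q : nat) (rho sigma : E -> bool), (0 < q)%N ->
      euler_equiv ends rho sigma ->
      [/\ (forall f : E -> R, flow_closed ends q sigma f ->
              flow_closed ends q rho (Qmap q rho sigma f)),
          (forall g : E -> R, flow_closed ends q rho g ->
              exists! (f : E -> R), flow_closed ends q sigma f /\ Qmap q rho sigma f = g),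
          (forall f : E -> R, flow_closed ends q sigma f -> lattice_point f ->
              lattice_point (Qmap q rho sigma f)),
          (forall g : E -> R, flow_open ends q rho g <->
              exists f : E -> R, flow_open ends q sigma f /\ Qmap q rho sigma f = g)
        & phi ends rho q = phi ends sigma q /\
          phibar ends rho q = phibar ends sigma q]).
Proof.
split; first by split; [exact: euler_equiv_refl | exact: euler_equiv_sym |
                        exact: euler_equiv_trans].
split; first exact: totally_cyclic_euler.
move=> q rho sigma _ eul; split.
- by move=> f /(flow_closed_Qmap q f eul).
- move=> g closed_g; exists (Qmap q rho sigma g); split.
    by rewrite QmapK; split=> //; apply/(flow_closed_Qmap _ _ eul); rewrite QmapK.
  by move=> f [_ <-]; rewrite QmapK.
- by move=> f _; apply: lattice_point_Qmap.
- move=> g; split=> [open_g | [f [open_f <-]]]; last exact/flow_open_Qmap.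
  exists (Qmap q rho sigma g); rewrite QmapK; split=> //.
  by apply/(flow_open_Qmap _ _ eul); rewrite QmapK.
- by split; [exact: phi_euler | exact: phibar_euler].
Qed.
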